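(* For integers $m\ge 1$ and $n\ge 0$, define $$\mathcal{C}_{m,n}= m!\left(\prod_{i=1}^{m}\frac{1}{n+i}\right)\binom{(m+1)n}{n,n,\dots,n}=\binom{m+n}{n}^{-1}\binom{(m+1)n}{n,n,\dots,n},$$ where the multinomial coefficient has $m+1$ lower entries all equal to $n$, i.e. equals $\frac{((m+1)n)!}{(n!)^{m+1}}$. Then $\mathcal{C}_{m,n}$ is an integer.
   Context: For $m=1$, $\mathcal{C}_{1,n}$ is the $n$-th Catalan number $\frac{1}{n+1}\binom{2n}{n}$. *)

From HB Require Import structures.
From mathcomp Require Import all_boot all_order all_algebra.
Set Implicit Arguments. Unset Strict Implicit. Unset Printing Implicit Defensive.
Import Order.TTheory GRing.Theory Num.Theory.
Local Open Scope ring_scope.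

Definition multinom_eq (m n : nat) : rat :=
  (((m.+1 * n)`!)%:R) / ((n`!)%:R ^+ m.+1).

Definition Cmn (m n : nat) : rat :=
  (m`!)%:R * (\prod_(1 <= i < m.+1) ((n + i)%:R)^-1) * multinom_eq m n.

(** By Legendre's formula the exponent of a prime p in n`! is the sum over
   k >= 1 of floor(n / p^k), so C_{m,n} = m`! ((m+1)n)`! / (n`!^m (n+m)`!)
   is an integer as soon as, for every q > 0,
     m floor(n/q) + floor((n+m)/q) <= floor(m/q) + floor((m+1)n/q).
   Writing n = A q + a and m = B q + b with a, b < q, this reduces to
   floor((a+b)/q) <= floor((m+1)a/q), which holds since a + b <= (m+1)a
   whenever a > 0. *)
From HB Require Import structures.
From mathcomp Require Import all_boot all_order all_algebra.
From mathcomp Require Import zify ring.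
Import Order.TTheory GRing.Theory Num.Theory.

Lemma leq_floor_Cmn m n q : 0 < q ->
  m * (n %/ q) + (n + m) %/ q <= m %/ q + (m.+1 * n) %/ q.
Proof.
move=> q_gt0; rewrite (divn_eq n q) (divn_eq m q).
have := ltn_pmod n q_gt0; have := ltn_pmod m q_gt0.
set A := n %/ q; set a := n %% q; set B := m %/ q; set b := m %% q.
clearbody A a B b => b_lt a_lt.
have -> : A * q + a + (B * q + b) = (A + B) * q + (a + b) by ring.
have -> : (B * q + b).+1 * (A * q + a) = (B * q + b).+1 * A * q + (B * q + b).+1 * a
  by ring.
rewrite !divnMDl //.
have carry : (a + b) %/ q <= ((B * q + b).+1 * a) %/ q.
  have [->|a_gt0] := posnP a; first by rewrite add0n divn_small.
  by apply: leq_div2r; nia.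
rewrite (divn_small a_lt) (divn_small b_lt); lia.
Qed.

Lemma logn_fact_widen p x K : prime p -> x <= K ->
  logn p x`! = \sum_(1 <= k < K.+1) x %/ p ^ k.
Proof.
move=> p_pr le_xK; rewrite logn_fact // [RHS](big_cat_nat _ (n := x.+1)) //=.
rewrite [X in _ + X]big1_seq ?addn0 // => k; rewrite mem_index_iota.
case/and3P=> _ lt_xk _; apply: divn_small; apply: (leq_trans lt_xk).
exact/ltnW/ltn_expl/prime_gt1.
Qed.

Lemma dvdn_from_logn d n : 0 < d -> 0 < n ->
  (forall p, prime p -> logn p d <= logn p n) -> d %| n.
Proof.
move=> d_gt0 n_gt0 le_log; apply/gcdn_idPl.
apply: eqn_from_log => //; first by rewrite gcdn_gt0 d_gt0.
move=> p; rewrite logn_gcd //; apply/minn_idPl.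
by have [/le_log|not_pr] := boolP (prime p); last by rewrite /logn (negPf not_pr).
Qed.

Lemma dvdn_fact_Cmn m n : n`! ^ m * (n + m)`! %| m`! * (m.+1 * n)`!.
Proof.
apply: dvdn_from_logn => [||p p_pr]; rewrite ?muln_gt0 ?expn_gt0 ?fact_gt0 //.
rewrite !lognM ?expn_gt0 ?fact_gt0 // lognX.
set K := m.+1 * n + m.
have widen x : x <= K -> logn p x`! = \sum_(1 <= k < K.+1) x %/ p ^ k.
  exact: logn_fact_widen.
rewrite !widen /K; try lia.
rewrite big_distrr -!big_split /=; apply: leq_sum => k _.
by apply: leq_floor_Cmn; rewrite expn_gt0 prime_gt0.
Qed.

Lemma fact_mul_prod_shift m n : n`! * \prod_(1 <= i < m.+1) (n + i) = (n + m)`!.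
Proof.
elim: m => [|m IHm]; first by rewrite big_geq // muln1 addn0.
by rewrite big_nat_recr //= mulnA IHm addnS factS mulnC.
Qed.

Local Open Scope ring_scope.

Lemma CmnE m n :
  Cmn m n = (m`! * (m.+1 * n)`!)%:R / (n`! ^ m * (n + m)`!)%N%:R :> rat.
Proof.
rewrite /Cmn /multinom_eq prodfV -natr_prod -(fact_mul_prod_shift m n).
have fact_neq0 k : (k`!)%:R != 0 :> rat by rewrite pnatr_eq0 -lt0n fact_gt0.
have prod_neq0 : (\prod_(1 <= i < m.+1) (n + i))%:R != 0 :> rat.
  have := fact_gt0 (n + m); rewrite -(fact_mul_prod_shift m n) muln_gt0.
  by rewrite pnatr_eq0 -lt0n => /andP[].
rewrite !natrM natrX exprS; field.
by rewrite prod_neq0 fact_neq0 expf_neq0.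
Qed.

Theorem mainTheorem9 (m n : nat) (hm : (1 <= m)%N) : Cmn m n \is a Num.int.
Proof.
rewrite CmnE -natr_div ?rpred_nat ?dvdn_fact_Cmn //.
by rewrite unitfE pnatr_eq0 -lt0n muln_gt0 expn_gt0 !fact_gt0.
Qed.
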